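(* In the setting described in the context, the algorithm MCF/OD is optimal: if it returns a solution, then that solution has the lowest possible cost, i.e. the sum over all commodities of the cost of the longest routing allowed for that commodity is minimal among all conflict-tree nodes whose restricted MCF solution satisfies the influx limit $\theta_m$ at every intermediate vertex $m$.
   Context: Setting (inter-cell routing). $\mathcal{G}_p=(V_p,E_p)$ is a directed graph whose vertices are ''cells''; each edge $e_{ml}\in E_p$ (from $m$ to $l$) has a positive weight, and the cost of a path is the sum of its edge weights. A commodity $c_{sg}\in\mathcal{C}=\{c_1,\dots,c_O\}$ is a group of $|c_{sg}|$ robots that all start at vertex $s$ and have goal vertex $g$. A flow assigns to each commodity $c_{sg}$ and edge $e_{ml}$ an integer $y_{sgml}\in[0,|c_{sg}|]$ satisfying flow conservation: for every vertex $l$, $\sum_{e_{ml}\in E_p} y_{sgml}-\sum_{e_{ln}\in E_p} y_{sgln}$ equals $|c_{sg}|$ if $l=g$, $-|c_{sg}|$ if $l=s$, and $0$ otherwise. The influx of a vertex $l$ is $\sum_{c_{sg}\in\mathcal{C}}\sum_{e_{ml}\in E_p} y_{sgml}$; influx limits $\theta_m$ are imposed at intermediate vertices (not the start or goal of the commodities concerned). A suboptimality bound $w_{\mathrm{mcf}}\ge1$ is given. Given, for each commodity, a set $SP_{sg}$ of allowed $s$–$g$ paths, the restricted MCF problem is the integer linear program: minimize $\alpha\sum_{c_{sg}}\mathcal{L}_{sg}+\beta\mathcal{L}_{in}$ (with $\beta\gg\alpha>0$) subject to flow conservation, $\mathcal{L}_{sg}\ge y_{sgml}$ for all edges and commodities,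 $\mathcal{L}_{in}\ge$ the influx of every intermediate vertex, $y_{sgml}\in[0,|c_{sg}|]$ for edges on a path of $SP_{sg}$, and $y_{sgml}=0$ otherwise. Algorithm MCF/OD (best-first search on a conflict tree). Each tree node stores a vector of counts $k_o\ge1$ ($o=1,\dots,O$), a set of allowed paths for each commodity (its $1$st through $k_o$-th shortest simple $s$–$g$ paths), a cost equal to the sum over commodities of the largest cost among that commodity's allowed paths, and a solution of the restricted MCF problem with these allowed paths. The root has all counts $1$. Repeatedly pop the OPEN node $P$ of lowest cost; compute the set $CS$ of intermediate vertices whose influx under $P$'s solution exceeds $\theta_m$; if $CS$ is empty, return $P$'s solution. Otherwise, for every commodity $c_o$ whose flow passes through a vertex of $CS$, create a child $A$ whose count vector is that of $P$ with $k_o$ increased by $1$ (skip if already visited), add the $k_o$-th shortest path $p_k$ of $c_o$ to its allowed paths; if the cost of $p_k$ is at most $w_{\mathrm{mcf}}$ times the cost of $c_o$'s shortest path, update $A$'s cost, solve the restricted MCF problem for $A$, and insert $A$ into OPEN if feasible. *)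

From HB Require Import structures.
From mathcomp Require Import all_boot all_order all_algebra.
Set Implicit Arguments. Unset Strict Implicit. Unset Printing Implicit Defensive.
Import Order.TTheory GRing.Theory Num.Theory.

(* A flow: y o m l = amount of commodity o on the (directed) pair (m,l). *)
Definition flow (V : finType) (O : nat) := 'I_O -> V -> V -> nat.

(* Count vectors k = (k_o)_o of a conflict-tree node. *)
Definition cvec (O : nat) := {ffun 'I_O -> nat}.

Record mcf_inst (R : realFieldType) (V : finType) (O : nat) := MkInst {
  E     : rel V;                 (* edge relation of G_p: E m l  <-> e_ml in E_p *)
  wt    : V -> V -> R;
  src   : 'I_O -> V;
  goal  : 'I_O -> V;
  csz   : 'I_O -> nat;
  theta : V -> nat;
  wmcf  : R;
  alpha : R;
  beta  : R;
  ksp   : 'I_O -> seq (seq V);   (* all simple s-g paths, by nondecreasing cost;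
                                    the i-th shortest is nth [::] (ksp o) i.-1 *)
  sol   : ('I_O -> seq (seq V)) -> option (flow V O)
      (* the MCF solver: solution of the restricted MCF problem for the
         given allowed path sets, None if infeasible *)
}.

Section Defs.
Variables (R : realFieldType) (V : finType) (O : nat) (I : mcf_inst R V O).

Definition simple_path (x y : V) (p : seq V) : bool :=
  if p is a :: q then [&& a == x, path (E I) a q, last a q == y & uniq p]
  else false.

Definition edges_of (p : seq V) : seq (V * V) := zip p (behead p).

Definition pcost (p : seq V) : R := (\sum_(e <- edges_of p) wt I e.1 e.2)%R.

Definition on_allowed (SP : 'I_O -> seq (seq V)) (o : 'I_O) (m l : V) : bool :=
  has (fun p => (m, l) \in edges_of p) (SP o).

Definition influx (y : flow V O) (l : V) : nat :=
  \sum_(o < O) \sum_(m | E I m l) y o m l.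

Definition intermediate (l : V) : bool :=
  [forall o : 'I_O, (src I o != l) && (goal I o != l)].

Definition mcf_feasible (SP : 'I_O -> seq (seq V)) (y : flow V O) : Prop :=
  [/\ (forall (o : 'I_O) (l : V),
         ((\sum_(m | E I m l) y o m l)%:Z - (\sum_(n | E I l n) y o l n)%:Z
          = if l == goal I o then (csz I o)%:Z
            else if l == src I o then - (csz I o)%:Z else 0)%R),
      (forall o m l, E I m l -> y o m l <= csz I o) &
      (forall o m l, ~~ on_allowed SP o m l -> y o m l = 0)].

(* objective alpha * sum_o L_sg + beta * L_in, with the auxiliary variables
   L_sg, L_in at their least admissible values *)
Definition mcf_obj (y : flow V O) : R :=
  (alpha I * (\sum_(o < O) ((\max_(e : V * V | E I e.1 e.2) y o e.1 e.2)%N)%:R)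
   + beta I * ((\max_(l | intermediate l) influx y l)%N)%:R)%R.

Definition mcf_optimal (SP : 'I_O -> seq (seq V)) (y : flow V O) : Prop :=
  mcf_feasible SP y /\ forall y', mcf_feasible SP y' -> (mcf_obj y <= mcf_obj y')%R.

Definition conflict_set (y : flow V O) : {set V} :=
  [set m | intermediate m && (theta I m < influx y m)].

Definition passes (y : flow V O) (o : 'I_O) : bool :=
  [exists m, (m \in conflict_set y) && [exists n, E I n m && (0 < y o n m)]].

Definition allowed (k : cvec O) (o : 'I_O) : seq (seq V) := take (k o) (ksp I o).

Definition node_sol (k : cvec O) : option (flow V O) := sol I (allowed k).

Definition node_cost (k : cvec O) : R :=
  (\sum_(o < O) \big[Num.max/0]_(p <- allowed k o) pcost p)%R.

Definition root : cvec O := [ffun _ => 1].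

Definition incr (k : cvec O) (o : 'I_O) : cvec O :=
  [ffun j => if j == o then (k j).+1 else k j].

(* the child incr k o gets a new path p_k (the (k o + 1)-th shortest), which
   exists, is within the suboptimality bound, and the MCF is feasible *)
Definition child_ok (k : cvec O) (o : 'I_O) : bool :=
  [&& k o < size (ksp I o),
      (pcost (nth [::] (ksp I o) (k o)) <= wmcf I * pcost (nth [::] (ksp I o) 0))%R
    & node_sol (incr k o) ].

Inductive in_tree : cvec O -> Prop :=
| tree_root : in_tree root
| tree_child (k : cvec O) (y : flow V O) (o : 'I_O) :
    in_tree k -> node_sol k = Some y -> conflict_set y != set0 ->
    passes y o -> child_ok k o -> in_tree (incr k o).

Record state := St { open : seq (cvec O); visited : seq (cvec O) }.

Definition init : state :=
  St (if node_sol root is Some _ then [:: root] else [::]) [:: root].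

Definition is_min (st : state) (P : cvec O) : Prop :=
  P \in open st /\ forall Q, Q \in open st -> (node_cost P <= node_cost Q)%R.

Definition expand_step (st st' : state) : Prop :=
  exists (P : cvec O) (y : flow V O),
    [/\ is_min st P, node_sol P = Some y, conflict_set y != set0 &
      let cs := [seq o <- enum 'I_O | passes y o && (incr P o \notin visited st)] in
      st' = St (rem P (open st) ++ [seq incr P o | o <- cs & child_ok P o])
               (visited st ++ [seq incr P o | o <- cs])].

Inductive reach : state -> Prop :=
| reach_init : reach init
| reach_step st st' : reach st -> expand_step st st' -> reach st'.

Definition returns (st : state) (P : cvec O) (y : flow V O) : Prop :=
  [/\ is_min st P, node_sol P = Some y & conflict_set y = set0].

End Defs.

From Pilot Require Import Defs.
From HB Require Import structures.
From mathcomp Require Import all_boot all_order all_algebra.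
Import Order.TTheory GRing.Theory Num.Theory.
Set Implicit Arguments.

(* A child's allowed paths extend its parent's, so node costs only grow down
   the conflict tree. Best-first search keeps the invariant that every visited
   feasible tree node is either still OPEN or has been expanded, i.e. it has a
   conflict and all of its conflicting children have been visited. Walking down
   the tree from the (visited) root towards a conflict-free feasible node k, one
   therefore meets an OPEN node no more expensive than k, and the popped node P,
   of least cost in OPEN, is no more expensive either. *)

Section ConflictTree.
Variables (R : realFieldType) (V : finType) (O : nat) (I : mcf_inst R V O).

Lemma allowed_incr_subset (k : cvec O) (o j : 'I_O) :
  {subset allowed I k j <= allowed I (incr k o) j}.
Proof.
rewrite /allowed /incr ffunE => p; case: eqP => // _.
by rewrite -(@take_takel _ (k j) (k j).+1) // => /mem_take.
Qed.

Lemma node_cost_incr (k : cvec O) (o : 'I_O) :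
  (node_cost I k <= node_cost I (incr k o))%R.
Proof.
by apply: ler_sum => j _; apply: sub_bigmax_seq; apply: allowed_incr_subset.
Qed.

Lemma in_tree_counts (k : cvec O) (o : 'I_O) : in_tree I k ->
  0 < k o /\
  (1 < k o -> (k o).-1 < size (ksp I o) /\
     (pcost I (nth [::] (ksp I o) (k o).-1)
      <= wmcf I * pcost I (nth [::] (ksp I o) 0))%R).
Proof.
elim=> [|{}k y j _ IHk _ _ _ ok_j]; first by rewrite /Defs.root ffunE.
rewrite /incr ffunE; case: eqP => [->|_ //].
by case/and3P: ok_j.
Qed.

Lemma child_ok_in_tree (k : cvec O) (o : 'I_O) (y : flow V O) :
  in_tree I k -> in_tree I (incr k o) -> node_sol I (incr k o) = Some y ->
  child_ok I k o.
Proof.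
move=> tree_k tree_ko sol_ko.
have [k_o_gt0 _] := in_tree_counts o tree_k.
have [_] := in_tree_counts o tree_ko; rewrite /incr ffunE eqxx /=.
by case/(_ k_o_gt0) => size_ok cost_ok; rewrite /child_ok size_ok cost_ok sol_ko.
Qed.

Definition expanded (st : state O) (k : cvec O) (y : flow V O) : Prop :=
  conflict_set I y != set0 /\ forall o, passes I y o -> incr k o \in visited st.

Definition search_invariant (st : state O) : Prop :=
  [/\ forall Q, Q \in open st -> in_tree I Q,
      Defs.root O \in visited st &
      forall k y, in_tree I k -> node_sol I k = Some y -> k \in visited st ->
        k \in open st \/ expanded st k y].

Lemma search_invariant_init : search_invariant (init I).
Proof.
split=> /= [Q||k y _ sol_k].
- by case: (node_sol I _) => // _; rewrite inE => /eqP ->; apply: tree_root.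
- exact: mem_head.
- by rewrite inE => /eqP k_root; left; rewrite -k_root sol_k mem_head.
Qed.

Lemma search_invariant_step (st st' : state O) :
  search_invariant st -> expand_step I st st' -> search_invariant st'.
Proof.
move=> [open_tree root_vis vis_done] [P [y [[P_open _] sol_P conf_P ->]]].
set cs := [seq o <- enum 'I_O | _].
have mem_cs o : (o \in cs) = passes I y o && (incr P o \notin visited st).
  by rewrite mem_filter mem_enum andbT.
split=> /= [Q|| k yk tree_k sol_k].
- rewrite mem_cat => /orP[/mem_rem/open_tree //|/mapP[o]].
  rewrite mem_filter mem_cs => /and3P[ok_o pass_o _] ->.
  exact: tree_child (open_tree P P_open) sol_P conf_P pass_o ok_o.
- by rewrite mem_cat root_vis.
rewrite !mem_cat => /orP[k_vis|/mapP[o o_cs k_ko]]; last first.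
  left; apply/orP; right; rewrite k_ko; apply: map_f.
  rewrite mem_filter o_cs andbT; rewrite k_ko in tree_k sol_k.
  exact: child_ok_in_tree (open_tree P P_open) tree_k sol_k.
have [k_open|[conf_k done_k]] := vis_done k yk tree_k sol_k k_vis; last first.
  by right; split=> // o /done_k; rewrite mem_cat => ->.
have [k_P|k_neq_P] := eqVneq k P; last by left; rewrite rem_mem.
move: sol_k; rewrite k_P sol_P => -[<-]; right; split=> // o pass_o.
rewrite mem_cat; case vis_o: (incr P o \in visited st) => //=.
by apply: map_f; rewrite mem_cs pass_o vis_o.
Qed.

Lemma reach_search_invariant (st : state O) : reach I st -> search_invariant st.
Proof.
elim=> [|s s' _ inv_s]; first exact: search_invariant_init.
exact: search_invariant_step.
Qed.

Lemma in_tree_open_below_or_visited (st : state O) (k : cvec O) :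
  search_invariant st -> in_tree I k ->
  (exists2 Q, Q \in open st & (node_cost I Q <= node_cost I k)%R)
  \/ k \in visited st.
Proof.
move=> [_ root_vis vis_done]; elim=> [|{}k y o tree_k IHk sol_k _ pass_o _].
  by right.
have cost_ko := node_cost_incr k o.
case: IHk => [[Q Q_open cost_Q]|k_vis].
  by left; exists Q => //; apply: le_trans cost_ko.
have [k_open|[_ done_k]] := vis_done k y tree_k sol_k k_vis.
  by left; exists k.
by right; apply: done_k.
Qed.

Lemma conflict_free_open_below (st : state O) (k : cvec O) (y : flow V O) :
  search_invariant st -> in_tree I k -> node_sol I k = Some y ->
  conflict_set I y = set0 ->
  exists2 Q, Q \in open st & (node_cost I Q <= node_cost I k)%R.
Proof.
move=> inv_st tree_k sol_k conf_k.
case: (in_tree_open_below_or_visited inv_st tree_k) => // k_vis.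
have [_ _ vis_done] := inv_st.
case: (vis_done k y tree_k sol_k k_vis) => [k_open|[]]; first by exists k.
by rewrite conf_k eqxx.
Qed.

End ConflictTree.

Theorem mainTheorem2 (R : realFieldType) (V : finType) (O : nat)
  (I : mcf_inst R V O)
  (hwt : forall u v, E I u v -> (0 < wt I u v)%R)
  (hcsz : forall o, 0 < csz I o)
  (hw : (1 <= wmcf I)%R)
  (hal : (0 < alpha I)%R) (hab : (alpha I < beta I)%R)
  (hksp : forall o, [/\ uniq (ksp I o),
            (forall p, (p \in ksp I o) = simple_path I (src I o) (goal I o) p) &
            sorted (fun p q => (pcost I p <= pcost I q)%R) (ksp I o)])
  (hsol : forall SP, match sol I SP with
                     | Some y => mcf_optimal I SP y
                     | None => forall y, ~ mcf_feasible I SP y end)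
  (st : state O) (P : cvec O) (y : flow V O) :
  reach I st -> returns I st P y ->
  forall (k : cvec O) (yk : flow V O),
    in_tree I k -> node_sol I k = Some yk -> conflict_set I yk = set0 ->
    (node_cost I P <= node_cost I k)%R.
Proof.
move=> reach_st [[_ P_min] _ _] k yk tree_k sol_k conf_k.
have [Q Q_open cost_Q] :=
  conflict_free_open_below (reach_search_invariant reach_st) tree_k sol_k conf_k.
exact: le_trans (P_min Q Q_open) cost_Q.
Qed.
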